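(* Let $\varphi\in C_0^\infty(\mathbb{R}^d)$ be a radial non-negative function supported in the unit ball, decreasing as the radius grows, with $\varphi(x)=1$ for $|x|\leq\frac34$. Let $\mu$ be a positive Borel measure on $\mathbb{R}^d$ such that $\mu(B_r(x))\leq r^{\alpha}$ for every open ball $B_r(x)$. Let $\nu$ be a signed measure absolutely continuous with respect to $\mu$. Then there is a constant $C$ such that for every disjoint family $\mathfrak{B}$ of open balls, $$\sum_{B_{r_j}(x_j)\in\mathfrak{B}}\left|\int\varphi\Big(\frac{y-x_j}{r_j}\Big)\,d\nu(y)\right|\leq C\, g\Big(\sum_{B_{r_j}(x_j)\in\mathfrak{B}} r_j^{\alpha}\Big),\qquad g(t)=\int_0^t\Big|\frac{d\nu}{d\mu}\Big|^*(s)\,ds.$$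
   Context: $\frac{d\nu}{d\mu}$ is the density of $\nu$ with respect to $\mu$. For a function $F$, its monotonic rearrangement (with respect to $\mu$) is $F^*(t)=\sup\{\beta : \mu\{x : F(x)>\beta\}\leq t\}$. A disjoint family of balls is one in which no two balls intersect. *)

From HB Require Import structures.
From mathcomp Require Import all_boot all_order all_algebra.
From mathcomp Require Import all_classical all_reals all_analysis.
Set Implicit Arguments. Unset Strict Implicit. Unset Printing Implicit Defensive.
Import Order.TTheory GRing.Theory Num.Theory.
Import numFieldNormedType.Exports.
Local Open Scope classical_set_scope.
Local Open Scope ring_scope.

Section defs.
Variables (R : realType) (d : nat).

Definition enorm (x : 'rV[R]_d) : R := Num.sqrt (\sum_(i < d) x ord0 i ^+ 2).

Definition eball (x : 'rV[R]_d) (r : R) : set 'rV[R]_d :=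
  [set y | enorm (y - x) < r].

(** R^d with its Borel sigma-algebra (generated by the open sets) *)
Definition Rd := g_sigma_algebraType (@open 'rV[R]_d).

Fixpoint Ck (k : nat) (f : 'rV[R]_d -> R) : Prop :=
  match k with
  | 0 => continuous f
  | k.+1 => continuous f /\
      forall v : 'rV[R]_d, (forall x, derivable f x v) /\ Ck k (fun x => 'D_v f x)
  end.

Definition smooth (f : 'rV[R]_d -> R) := forall k, Ck k f.

Definition compact_support (f : 'rV[R]_d -> R) :=
  compact (closure [set x | f x != 0]).
End defs.

Section charge_integral.
Context dT (T : measurableType dT) (R : realType).

(** Integral of h against a signed measure nu, defined via the Jordan
    decomposition nu = nu^+ - nu^- (for some Hahn decomposition). *)
Definition charge_integral (nu : {charge set T -> \bar R}) (h : T -> \bar R)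
    : \bar R :=
  let P := projT1 (cid (Hahn_decomposition nu)) in
  let HN := projT2 (cid (Hahn_decomposition nu)) in
  let N := projT1 (cid HN) in
  let nuPN := projT2 (cid HN) in
  (\int[jordan_pos nuPN]_x h x - \int[jordan_neg nuPN]_x h x)%E.

(** monotone (decreasing) rearrangement of F w.r.t. mu:
    F^*(t) = inf { b >= 0 : mu {x | F x > b} <= t } *)
Definition rearrangement (mu : set T -> \bar R) (F : T -> R) (t : R) : \bar R :=
  ereal_inf [set b%:E | b in [set b : R | 0 <= b /\ (mu [set x | (b < F x)%R] <= t%:E)%E]].

Definition g_rearr (mu : set T -> \bar R) (F : T -> R) (t : \bar R) : \bar R :=
  (\int[lebesgue_measure]_(s in [set s : R | (0 <= s)%R /\ (s%:E <= t)%E])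
     rearrangement mu F s)%E.
End charge_integral.

(* The bound holds with C = 1.  As phi takes values in [0, 1] and vanishes
   outside the unit ball, each term |int phi((y - x_j)/r_j) dnu(y)| is at most
   the integral of F = |dnu/dmu| over B_{r_j}(x_j); the disjoint balls add up
   to the integral of F over their union E, and mu(E) <= sum r_j^alpha.  It
   remains to prove the Hardy-Littlewood bound int_E F dmu <= int_0^{mu(E)} F^*.
   Two applications of the layer-cake formula give
     int_E F dmu = int_0^oo lambda(b) db
                 = int_0^oo |{b >= 0 : s < lambda(b)}| ds
   with lambda(b) = mu(E /\ {F > b}); every such b is at most F^*(s), and the
   set is empty once s >= mu(E). *)

From HB Require Import structures.
From mathcomp Require Import all_boot all_order all_algebra.
From mathcomp Require Import all_classical all_reals all_analysis.
From mathcomp Require Import measurable_realfun.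

Set Implicit Arguments.
Unset Strict Implicit.
Unset Printing Implicit Defensive.

Import Order.TTheory GRing.Theory Num.Theory.
Import numFieldNormedType.Exports.
Local Open Scope classical_set_scope.
Local Open Scope ring_scope.

Section integral_monotone.
Local Open Scope ereal_scope.
Context d (T : measurableType d) (R : realType).
Variable mu : {measure set T -> \bar R}.

(* The integral of a nonnegative function is a supremum over the simple
   functions below it, hence monotone without any measurability. *)
Lemma ge0_le_integral_any (D : set T) (f1 f2 : T -> \bar R) :
  (forall x, D x -> 0 <= f1 x) -> (forall x, D x -> f1 x <= f2 x) ->
  \int[mu]_(x in D) f1 x <= \int[mu]_(x in D) f2 x.
Proof.
move=> f10 f12.
have f20 x : D x -> 0 <= f2 x.
  by move=> Dx; exact: le_trans (f10 x Dx) (f12 x Dx).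
rewrite !ge0_integralE//; apply: ge_ereal_sup => _ [h hf <-].
apply: ereal_sup_ubound; exists h => // x.
apply: le_trans (hf x) _; rewrite /patch; case: ifP => // /[!inE] Dx.
exact: f12.
Qed.

Lemma le_integral_indic (A : set T) (h : T -> \bar R) :
  measurable A -> (forall x, 0 <= h x) -> (forall x, h x <= (\1_A x)%:E) ->
  \int[mu]_x h x <= mu A.
Proof.
move=> mA h0 hA; rewrite -[X in _ <= mu X]setIT -integral_indic//.
by apply: ge0_le_integral_any => x _.
Qed.

End integral_monotone.

Lemma fubini_tonelli_sections d1 d2 (T1 : measurableType d1)
    (T2 : measurableType d2) (R : realType)
    (m1 : {sigma_finite_measure set T1 -> \bar R})
    (m2 : {sigma_finite_measure set T2 -> \bar R}) (A : set (T1 * T2)) :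
  measurable A ->
  (\int[m1]_x m2 (xsection A x) = \int[m2]_y m1 (ysection A y))%E.
Proof.
move=> mA.
transitivity (\int[m1]_x fubini_F m2 (EFin \o \1_A) x)%E.
  by rewrite indic_fubini_tonelli_FE.
transitivity (\int[m2]_y fubini_G m1 (EFin \o \1_A) y)%E; last first.
  by rewrite indic_fubini_tonelli_GE.
apply: fubini_tonelli; first exact/measurable_EFinP/measurable_indic.
by move=> p; rewrite lee_fin.
Qed.

Lemma measurable_set_ltr d (T : measurableType d) (R : realType)
    (f g : T -> R) :
  measurable_fun setT f -> measurable_fun setT g ->
  measurable [set x | f x < g x].
Proof.
move=> mf mg; have := measurable_fun_ltr mf mg measurableT (Y := [set true]).
by rewrite setTI; apply.
Qed.

Lemma lebesgue_measure_itv_co0 (R : realType) (c : R) : 0 <= c ->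
  lebesgue_measure `[0, c[%classic = c%:E.
Proof.
rewrite lebesgue_measure_itv/= lte_fin oppr0 adde0 le_eqVlt.
by move=> /predU1P[<-|->//]; rewrite ltxx.
Qed.

Section layer_cake.
Local Open Scope ereal_scope.
Context d (T : measurableType d) (R : realType).
Variable m : {sigma_finite_measure set T -> \bar R}.

Lemma ge0_integral_layer_cake (D : set T) (h : T -> R) :
  measurable D -> (forall x, (0 <= h x)%R) -> measurable_fun setT h ->
  \int[m]_(x in D) (h x)%:E =
  \int[lebesgue_measure]_(s in [set s : R | (0 <= s)%R])
     m (D `&` [set x | (s < h x)%R]).
Proof.
move=> mD h0 mh.
pose A := [set p : T * R | [/\ D p.1, (0 <= p.2)%R & (p.2 < h p.1)%R]].
have mA : measurable A.
  have -> : A = D `*` [set s | (0 <= s)%R] `&` [set p | (p.2 < h p.1)%R].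
    by apply/seteqP; split => [[x s] [] | [x s] [[]]].
  apply: measurableI; first by apply: measurableX => //; rewrite -set_itvcy.
  apply: measurable_set_ltr; first exact: measurable_snd.
  exact: measurableT_comp.
rewrite integral_mkcond [RHS]integral_mkcond.
transitivity (\int[m]_x lebesgue_measure (xsection A x)).
  apply: eq_integral => x _; rewrite /patch; case: ifPn => [/set_mem Dx|].
    rewrite -lebesgue_measure_itv_co0//; congr (lebesgue_measure _).
    apply/seteqP; split => s; rewrite /xsection/= in_itv/= inE.
      by move=> /andP[].
    by move=> [_ -> ->].
  rewrite notin_setE => Dx; rewrite (_ : xsection A x = set0) ?measure0//.
  by apply/seteqP; split => s //; rewrite /xsection/= inE => -[/Dx].
rewrite fubini_tonelli_sections//; apply: eq_integral => s _.
rewrite /patch; case: ifPn => [/set_mem s0|].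
  by congr (m _); apply/seteqP; split => x; rewrite /ysection/= inE => -[].
rewrite notin_setE => s0; rewrite (_ : ysection A s = set0) ?measure0//.
by apply/seteqP; split => x //; rewrite /ysection/= inE => -[_ /s0].
Qed.

End layer_cake.

Section rearrangement.
Local Open Scope ereal_scope.
Context d (T : measurableType d) (R : realType).
Variables (mu : {measure set T -> \bar R}) (F : T -> R).
Hypothesis mF : measurable_fun setT F.

Let measurable_level (b : R) : measurable [set x | (b < F x)%R].
Proof. exact: measurable_set_ltr. Qed.

Lemma rearrangement_ge0 (s : R) : 0 <= rearrangement mu F s.
Proof. by apply: le_ereal_inf_tmp => _ [b [b0 _] <-]; rewrite lee_fin. Qed.

Lemma le_rearrangement (b s : R) :
  s%:E < mu [set x | (b < F x)%R] -> b%:E <= rearrangement mu F s.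
Proof.
move=> sb; apply: le_ereal_inf_tmp => _ [b' [_ b's] <-].
rewrite lee_fin leNgt; apply/negP => b'b; move: sb; apply/negP; rewrite -leNgt.
apply: le_trans b's; apply: le_measure; rewrite ?inE//.
by move=> x /= /(lt_trans b'b).
Qed.

Lemma lebesgue_measure_le_rearrangement (Y : set R) (s : R) : measurable Y ->
  (forall b, Y b -> (0 <= b)%R /\ s%:E < mu [set x | (b < F x)%R]) ->
  lebesgue_measure Y <= rearrangement mu F s.
Proof.
move=> mY Ybig; have := rearrangement_ge0 s.
case Fs : (rearrangement mu F s) => [r| |] // r0; last exact: leey.
have Y0r : Y `<=` `[0%R, r]%classic.
  move=> b Yb; have [b0 sb] := Ybig b Yb.
  by rewrite /= in_itv/= b0 -lee_fin -Fs le_rearrangement.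
apply: (@le_trans _ _ (lebesgue_measure `[0%R, r]%classic)).
  by apply: le_measure; rewrite ?inE.
by rewrite lebesgue_measure_itv/= lte_fin oppr0 adde0; case: ifPn.
Qed.

Section distribution.
Variable E : set T.
Hypotheses (mE : measurable E) (muEoo : mu E < +oo).

Definition distribution (b : R) : R := fine (mu (E `&` [set x | (b < F x)%R])).

Lemma distributionE b :
  (distribution b)%:E = mu (E `&` [set x | (b < F x)%R]).
Proof.
rewrite fineK// ge0_fin_numE// (le_lt_trans _ muEoo)//.
by apply: le_measure; rewrite ?inE//; exact: measurableI.
Qed.

Lemma distribution_le b : (distribution b)%:E <= mu E.
Proof.
by rewrite distributionE; apply: le_measure; rewrite ?inE//; exact: measurableI.
Qed.

Lemma distribution_ge0 b : (0 <= distribution b)%R.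
Proof. by rewrite -lee_fin distributionE. Qed.

Lemma measurable_distribution : measurable_fun setT distribution.
Proof.
apply: nonincreasing_measurable => // a b ab; rewrite -lee_fin !distributionE.
apply: le_measure; rewrite ?inE//; try exact: measurableI.
by move=> x [Ex /= bF]; split => //; exact: le_lt_trans bF.
Qed.

Hypothesis F0 : forall x, (0 <= F x)%R.

(* [mu] need not be sigma-finite, but its restriction to [E] is finite. *)
Lemma ge0_integral_distribution :
  \int[mu]_(x in E) (F x)%:E =
  \int[lebesgue_measure]_(b in [set b : R | (0 <= b)%R]) (distribution b)%:E.
Proof.
rewrite (eq_measure_integral (mfrestr mE muEoo)) => [|A mA AE]; last first.
  by rewrite /= /mfrestr /mrestr setIidl.
rewrite ge0_integral_layer_cake//; apply: eq_integral => b _.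
by rewrite /= /mfrestr /mrestr setIAC setIid distributionE.
Qed.

Lemma ge0_integral_le_g_rearr (t : \bar R) : mu E <= t ->
  \int[mu]_(x in E) (F x)%:E <= g_rearr mu F t.
Proof.
move=> muEt.
rewrite ge0_integral_distribution ge0_integral_layer_cake; first last.
- exact: measurable_distribution.
- exact: distribution_ge0.
- by rewrite -set_itvcy.
rewrite /g_rearr integral_mkcond [leRHS]integral_mkcond.
apply: ge0_le_integral_any => s _; rewrite /patch; first by case: ifPn.
case: ifPn => [/set_mem/= s0|s0]; last first.
  by case: ifPn => // /set_mem[s0' _]; move: s0; rewrite notin_setE.
case: ifPn => [/set_mem/= [_ st]|sNt].
  apply: lebesgue_measure_le_rearrangement => [|b [b0 sG]].
    apply: measurableI; first by rewrite -set_itvcy.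
    by apply: measurable_set_ltr => //; exact: measurable_distribution.
  split => //; apply: (lt_le_trans (_ : _ < (distribution b)%:E)).
    by rewrite lte_fin.
  rewrite distributionE; apply: le_measure; rewrite ?inE//.
  exact: measurableI.
rewrite (_ : _ `&` _ = set0) ?measure0//.
apply/seteqP; split => b // [_ sG]; apply: (negP sNt); apply/mem_set.
split => //; apply: le_trans muEt; apply: le_trans (distribution_le b).
by rewrite lee_fin ltW.
Qed.

End distribution.

End rearrangement.

Section charge_density.
Local Open Scope ereal_scope.
Context d (T : measurableType d) (R : realType).
Variables (mu : {measure set T -> \bar R}) (nu : {charge set T -> \bar R}).
Variable f : T -> R.
Hypothesis mf : measurable_fun setT f.
Hypothesis f_dens : forall A, measurable A -> nu A = \int[mu]_(x in A) (f x)%:E.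

Lemma abse_charge_le_integral (A : set T) : measurable A ->
  `|nu A| <= \int[mu]_(x in A) (`|f x|)%:E.
Proof.
move=> mA; rewrite f_dens//; apply: le_abse_integral => //.
exact/measurable_EFinP/measurable_funS/mf.
Qed.

Lemma abse_jordan_integral_le (P N : set T) (nuPN : hahn_decomposition nu P N)
    (A : set T) (h : T -> \bar R) :
  measurable A -> (forall x, 0 <= h x) -> (forall x, h x <= (\1_A x)%:E) ->
  `|\int[jordan_pos nuPN]_x h x - \int[jordan_neg nuPN]_x h x|
    <= \int[mu]_(x in A) (`|f x|)%:E.
Proof.
move=> mA h0 hA; have [[mP _] [mN _] PUN PIN] := nuPN.
have posA : \int[jordan_pos nuPN]_x h x <= \int[mu]_(x in A `&` P) (`|f x|)%:E.
  apply: (le_trans (le_integral_indic _ mA h0 hA)).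
  rewrite /= jordan_posE cjordan_posE /crestr0 /crestr mem_set//.
  by apply: le_trans (lee_abs _) _; exact/abse_charge_le_integral/measurableI.
have negA : \int[jordan_neg nuPN]_x h x <= \int[mu]_(x in A `&` N) (`|f x|)%:E.
  apply: (le_trans (le_integral_indic _ mA h0 hA)).
  rewrite /= jordan_negE cjordan_negE /crestr0 /crestr mem_set//.
  apply: le_trans (lee_abs _) _; rewrite abseN.
  exact/abse_charge_le_integral/measurableI.
have -> : A = (A `&` P) `|` (A `&` N) by rewrite -setIUr PUN setIT.
rewrite ge0_integral_setU//; first last.
- by apply/disj_set2P; rewrite setIACA PIN setI0.
- exact/measurable_EFinP/measurable_funS/measurableT_comp/mf.
- exact: measurableI.
- exact: measurableI.
apply: le_trans (lee_abs_sub _ _) _.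
by rewrite !gee0_abs; [exact: leeD | apply: integral_ge0 => x _..].
Qed.

Lemma abse_charge_integral_le (A : set T) (h : T -> \bar R) :
  measurable A -> (forall x, 0 <= h x) -> (forall x, h x <= (\1_A x)%:E) ->
  `|charge_integral nu h| <= \int[mu]_(x in A) (`|f x|)%:E.
Proof. exact: abse_jordan_integral_le. Qed.

End charge_density.

Section enorm.
Context (R : realType) (d : nat).
Implicit Types x y : 'rV[R]_d.

Lemma enorm_ge0 x : 0 <= enorm x.
Proof. exact: sqrtr_ge0. Qed.

Lemma enorm0 : enorm (0 : 'rV[R]_d) = 0.
Proof. by rewrite /enorm big1 ?sqrtr0// => i _; rewrite mxE expr0n. Qed.

Lemma enormZ (c : R) x : enorm (c *: x) = `|c| * enorm x.
Proof.
rewrite /enorm -sqrtr_sqr -sqrtrM ?sqr_ge0//; congr Num.sqrt.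
by rewrite mulr_sumr; apply: eq_bigr => i _; rewrite mxE exprMn.
Qed.

Lemma continuous_enorm : continuous (@enorm R d).
Proof.
have sumsq_cont : continuous (fun x : 'rV[R]_d => \sum_(i < d) x ord0 i ^+ 2).
  apply: continuous_big => [|i _ y]; first exact: add_continuous.
  by apply: continuousM; exact: coord_continuous.
move=> x; apply: continuous_comp; first exact: sumsq_cont.
exact: sqrt_continuous.
Qed.

Lemma open_eball x (r : R) : open (eball x r).
Proof.
rewrite /eball -[X in open X]/((fun y => enorm (y - x)) @^-1` [set z | z < r]).
apply: open_comp; last exact: open_lt.
move=> y _; apply: continuous_comp; last exact: continuous_enorm.
by apply: continuousB => //; exact: cst_continuous.
Qed.

Lemma measurable_eball x (r : R) : measurable (eball x r : set (Rd R d)).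
Proof. by apply: sub_sigma_algebra; exact: open_eball. Qed.

End enorm.

Section balls.
Context (R : realType) (d : nat).
Implicit Types (c : 'rV[R]_d) (r : R).

Lemma rescale_le_indic_eball (phi : 'rV[R]_d -> R) c r (y : 'rV[R]_d) :
  (forall x, phi x <= 1) -> (forall x, phi x != 0 -> enorm x < 1) -> 0 < r ->
  phi (r^-1 *: (y - c)) <= \1_(eball c r) y.
Proof.
move=> phi_le1 phi_supp r0; rewrite indicE.
have [//|yNB] := boolP (y \in eball c r); rewrite le_eqVlt; apply/orP; left.
apply: contraNT yNB => /phi_supp; rewrite enormZ ger0_norm ?invr_ge0 ?ltW//.
by rewrite ltr_pdivrMl// mulr1 => ?; exact: mem_set.
Qed.

Lemma trivIset_eball (B : set ('rV[R]_d * R)) :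
  (forall b b', B b -> B b' -> b <> b' ->
     eball b.1 b.2 `&` eball b'.1 b'.2 = set0) ->
  trivIset B (fun b => eball b.1 b.2).
Proof.
move=> Bdisj b b' Bb Bb' [x Bx]; apply: contrapT => bb'.
by have /seteqP[/(_ x Bx)] := Bdisj _ _ Bb Bb' bb'.
Qed.

End balls.

Section disjoint_balls.
Context (R : realType) (d : nat) (alpha : R) (phi : 'rV[R]_d -> R).
Hypotheses (phi_ge0 : forall x, 0 <= phi x) (phi_le1 : forall x, phi x <= 1).
Hypothesis phi_supp : forall x, phi x != 0 -> enorm x < 1.
Variable mu : {measure set Rd R d -> \bar R}.
Variable nu : {charge set Rd R d -> \bar R}.
Hypothesis mu_ball : forall x r, 0 < r -> (mu (eball x r) <= (r `^ alpha)%:E)%E.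
Variable f : Rd R d -> R.
Hypothesis mf : measurable_fun setT f.
Hypothesis f_dens :
  forall A, measurable A -> nu A = (\int[mu]_(x in A) (f x)%:E)%E.

Lemma sum_bump_integrals_le_g_rearr (s : seq ('rV[R]_d * R)) (t : \bar R) :
  uniq s -> (forall b, b \in s -> 0 < b.2) ->
  trivIset [set` s] (fun b => eball b.1 b.2) ->
  (\sum_(b <- s) (b.2 `^ alpha)%:E <= t)%E ->
  (\sum_(b <- s)
     `|charge_integral nu (fun y : Rd R d => (phi (b.2^-1 *: (y - b.1)))%:E)|
    <= g_rearr mu (fun x => `|f x|%R) t)%E.
Proof.
move=> s_uniq s_pos s_disj st.
pose U : set (Rd R d) := \big[setU/set0]_(b <- s) eball b.1 b.2.
have mU : measurable U.
  by apply: bigsetU_measurable => b _; exact: measurable_eball.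
have muU : (mu U <= \sum_(b <- s) (b.2 `^ alpha)%:E)%E.
  rewrite /U -bigcup_seq measure_fin_bigcup//; last first.
    by move=> b _; exact: measurable_eball.
  rewrite -fsbig_seq// big_seq [leRHS]big_seq.
  by apply: lee_sum => b /s_pos; exact: mu_ball.
apply: le_trans (_ : _ <= \int[mu]_(y in U) (`|f y|)%:E)%E _.
  rewrite ge0_integral_bigsetU//; first last.
  - apply/measurable_EFinP; apply: measurable_funS (subsetT _) _ => //.
    exact: measurableT_comp.
  - by move=> b; exact: measurable_eball.
  rewrite big_seq [leRHS]big_seq; apply: lee_sum => b /s_pos b0.
  apply: abse_charge_integral_le => // [|y|y]; first exact: measurable_eball.
    by rewrite lee_fin.
  by rewrite lee_fin; exact: rescale_le_indic_eball.
apply: ge0_integral_le_g_rearr => //; first exact: measurableT_comp.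
- by apply: le_lt_trans muU _; rewrite sumEFin ltry.
- exact: le_trans muU st.
Qed.

End disjoint_balls.

Theorem lemma16 (R : realType) (d : nat) (alpha : R) (phi : 'rV[R]_d -> R)
  (phi_smooth : smooth phi) (phi_cpt : compact_support phi)
  (phi_ge0 : forall x, 0 <= phi x)
  (phi_supp : forall x, phi x != 0 -> enorm x < 1)
  (phi_radial : forall x y, enorm x = enorm y -> phi x = phi y)
  (phi_decr : forall x y, enorm x <= enorm y -> phi y <= phi x)
  (phi_one : forall x, enorm x <= 3 / 4 -> phi x = 1)
  (mu : {measure set Rd R d -> \bar R})
  (mu_ball : forall (x : 'rV[R]_d) (r : R), 0 < r ->
     (mu (eball x r) <= (r `^ alpha)%:E)%E)
  (nu : {charge set Rd R d -> \bar R}) (nu_ac : nu `<< mu)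
  (f : Rd R d -> R) (f_int : mu.-integrable setT (EFin \o f))
  (f_dens : forall A : set (Rd R d), measurable A ->
     nu A = (\int[mu]_(x in A) (f x)%:E)%E) :
  exists C : R, forall B : set ('rV[R]_d * R),
    (forall b, B b -> 0 < b.2) ->
    (forall b b', B b -> B b' -> b <> b' ->
       eball b.1 b.2 `&` eball b'.1 b'.2 = set0) ->
    (\esum_(b in B)
        `| charge_integral nu (fun y : Rd R d => (phi (b.2^-1 *: (y - b.1)))%:E) |
     <= C%:E * g_rearr mu (fun x => `|f x|%R) (\esum_(b in B) (b.2 `^ alpha)%:E))%E.
Proof.
have phi_le1 x : phi x <= 1.
  have <- : phi 0 = 1 by apply: phi_one; rewrite enorm0.
  by apply: phi_decr; rewrite enorm0 enorm_ge0.
have [/measurable_EFinP mf _] := integrableP _ _ _ f_int.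
exists 1 => B Bpos Bdisj; rewrite mul1e.
apply: ge_ereal_sup => _ [X [finX XB] <-].
have [Xs XE] := finite_fsetP.1 finX; subst X.
set s := finmap.enum_fset Xs; have s_uniq : uniq s := finmap.fset_uniq Xs.
have sB b : b \in s -> B b by move=> bs; exact: XB.
rewrite -fsbig_seq//.
apply: (sum_bump_integrals_le_g_rearr (alpha := alpha)) => //.
- by move=> b /sB /Bpos.
- by apply: sub_trivIset (trivIset_eball Bdisj) => b /sB.
- apply: esum_ge; exists [set` s]; last by rewrite fsbig_seq.
  by split; [exact: finite_seq | move=> b /sB].
Qed.
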